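(* Let $(x^{(i)},y^{(i)},s^{(i)})$, $i=1,\dots,\ell$, be the weighted centers of $w^{(i)}\in\mathbb R^m_{++}$. Let $\beta_i\in[0,1]$ with $\sum_{i=1}^\ell\beta_i=1$, and fix $j\in\{1,\dots,\ell\}$. Then $\bigl(\sum_i\beta_ix^{(i)},\,y^{(j)},\,\sum_i\beta_is^{(i)}\bigr)$ is the weighted center of $$w:=\sum_{i=1}^\ell\beta_iY^{(j)}(Y^{(i)})^{-1}w^{(i)},$$ and moreover $\sum_{k=1}^m w_k=\sum_{k=1}^m w^{(j)}_k$.
   Context: Let $A\in\mathbb R^{m\times n}$ have full column rank $n\le m$ and $b\in\mathbb R^m$ be such that $\{x:Ax\le b\}$ is bounded with nonempty interior. For $w\in\mathbb R^m_{++}$ the weighted center of $w$ is the unique $(x,y,s)$ with $Ax+s=b$, $s>0$, $A^\top y=0$, $\mathrm{Diag}(s)y=w$. $Y^{(i)}=\mathrm{Diag}(y^{(i)})$. *)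

From HB Require Import structures.
From mathcomp Require Import all_boot all_order all_algebra.
Set Implicit Arguments. Unset Strict Implicit. Unset Printing Implicit Defensive.
Import Order.TTheory GRing.Theory Num.Theory.
Local Open Scope ring_scope.

Section WC.
Variables (R : realFieldType) (m n : nat).

Definition full_column_rank (A : 'M[R]_(m, n)) : Prop := \rank A = n.

Definition polytope_bounded (A : 'M[R]_(m, n)) (b : 'cV[R]_m) : Prop :=
  exists M : R, forall x : 'cV[R]_n,
    (forall k, (A *m x) k 0 <= b k 0) -> forall i, `|x i 0| <= M.

Definition polytope_nonempty_interior (A : 'M[R]_(m, n)) (b : 'cV[R]_m) : Prop :=
  exists x : 'cV[R]_n, forall k, (A *m x) k 0 < b k 0.

Definition is_weighted_center (A : 'M[R]_(m, n)) (b : 'cV[R]_m)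
  (w : 'cV[R]_m) (x : 'cV[R]_n) (y s : 'cV[R]_m) : Prop :=
  [/\ A *m x + s = b,
      forall k, 0 < s k 0,
      A^T *m y = 0
    & forall k, s k 0 * y k 0 = w k 0].

End WC.

From HB Require Import structures.
From mathcomp Require Import all_boot all_order all_algebra.
From mathcomp Require Import ring.
Set Implicit Arguments.
Unset Strict Implicit.
Unset Printing Implicit Defensive.
Import Order.TTheory GRing.Theory Num.Theory.
Local Open Scope ring_scope.

(* Let (x_i, y_i, s_i) be weighted centers of w_i and put
   x = sum_i beta_i x_i, s = sum_i beta_i s_i, with beta a probability vector.
   - Primal feasibility A x + s = b holds because A x + s = b is an affine
     condition and the beta_i sum to 1 ([affine_comb_slack]).
   - s > 0 because a convex combination of positive reals is positive
     ([convex_comb_gt0]).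
   - A^T y_j = 0 is inherited from the j-th center.
   - The weight of (x, y_j, s) is s_k (y_j)_k = sum_i beta_i (s_i)_k (y_j)_k,
     and since (y_i)_k = (w_i)_k / (s_i)_k is nonzero, (s_i)_k equals
     (y_i)_k^-1 (w_i)_k ([center_dual_neq0], [center_slack_eq]).
   - The total weight sum_k s_k (y_j)_k equals sum_k (s_j)_k (y_j)_k: both s
     and s_j are slacks of primal solutions, so s - s_j lies in the range of A,
     which is orthogonal to y_j ([slack_dot_dual]). *)

Lemma comb_entry (R : pzRingType) (m l : nat)
    (beta : 'I_l -> R) (v : 'I_l -> 'cV[R]_m) (k : 'I_m) :
  (\sum_(i < l) beta i *: v i) k 0 = \sum_(i < l) beta i * v i k 0.
Proof. by rewrite summxE; apply: eq_bigr => i _; rewrite mxE. Qed.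

Lemma affine_comb_slack (R : comPzRingType) (m n l : nat)
    (A : 'M[R]_(m, n)) (b : 'cV[R]_m)
    (xi : 'I_l -> 'cV[R]_n) (si : 'I_l -> 'cV[R]_m) (beta : 'I_l -> R) :
  (forall i, A *m xi i + si i = b) -> \sum_(i < l) beta i = 1 ->
  A *m (\sum_(i < l) beta i *: xi i) + \sum_(i < l) beta i *: si i = b.
Proof.
move=> primal_i hsum; rewrite mulmx_sumr -big_split /=.
under eq_bigr => i _ do rewrite -scalemxAr -scalerDr primal_i.
by rewrite -scaler_suml hsum scale1r.
Qed.

Lemma convex_comb_gt0 (R : realDomainType) (l : nat)
    (beta f : 'I_l -> R) :
  (forall i, 0 <= beta i) -> \sum_(i < l) beta i = 1 ->
  (forall i, 0 < f i) -> 0 < \sum_(i < l) beta i * f i.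
Proof.
move=> hb0 hsum hf.
have [i0 beta_i0_gt0] : exists i0, 0 < beta i0.
  apply/existsP; apply: contraT; rewrite negb_exists => /forallP hno.
  move: hsum; rewrite big1 => [/eqP|i _]; first by rewrite eq_sym oner_eq0.
  by apply/eqP; rewrite eq_le hb0 andbT leNgt hno.
rewrite (bigD1 i0) //=; apply: ltr_wpDr; last exact: mulr_gt0.
by apply: sumr_ge0 => i _; apply: mulr_ge0; [exact: hb0 | exact: ltW].
Qed.

(* The slacks of any two primal solutions have the same inner product with
   a dual vector y satisfying A^T y = 0, since their difference is in the
   range of A. *)
Lemma slack_dot_dual (R : comPzRingType) (m n : nat)
    (A : 'M[R]_(m, n)) (b : 'cV[R]_m) (x x' : 'cV[R]_n) (s s' y : 'cV[R]_m) :
  A *m x + s = b -> A *m x' + s' = b -> A^T *m y = 0 ->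
  \sum_(k < m) s k 0 * y k 0 = \sum_(k < m) s' k 0 * y k 0.
Proof.
move=> hx hx' hy.
have slack_diff : s - s' = A *m (x' - x).
  have s_eq : s = b - A *m x by rewrite -hx addrC addKr.
  have s'_eq : s' = b - A *m x' by rewrite -hx' addrC addKr.
  by rewrite s_eq s'_eq mulmxBr opprB addrC addrA subrK.
have orth : (s - s')^T *m y = 0.
  by rewrite slack_diff trmx_mul -mulmxA hy mulmx0.
move/(congr1 (fun M : 'M[R]_1 => M 0 0)): orth; rewrite !mxE => orth.
apply/eqP; rewrite -subr_eq0 -sumrB; apply/eqP; rewrite -[RHS]orth.
by apply: eq_bigr => k _; rewrite !mxE mulrBl.
Qed.

Section WeightedCenter.
Variables (R : realFieldType) (m n : nat).
Variables (A : 'M[R]_(m, n)) (b w : 'cV[R]_m) (x : 'cV[R]_n) (y s : 'cV[R]_m).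
Hypothesis center : is_weighted_center A b w x y s.
Hypothesis wpos : forall k, 0 < w k 0.

Lemma center_dual_neq0 k : y k 0 != 0.
Proof.
case: center => _ _ _ hW; apply/eqP => y0.
by have := wpos k; rewrite -hW y0 mulr0 ltxx.
Qed.

Lemma center_slack_eq k : s k 0 = (y k 0)^-1 * w k 0.
Proof.
case: center => _ _ _ hW.
by rewrite -hW [_ * y k 0]mulrC mulKf // center_dual_neq0.
Qed.

End WeightedCenter.

Theorem lemmaA2 (R : realFieldType) (m n l : nat)
  (A : 'M[R]_(m, n)) (b : 'cV[R]_m)
  (hrank : full_column_rank A)
  (hbdd : polytope_bounded A b)
  (hint : polytope_nonempty_interior A b)
  (wi : 'I_l -> 'cV[R]_m)
  (xi : 'I_l -> 'cV[R]_n) (yi si : 'I_l -> 'cV[R]_m)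
  (hwpos : forall i k, 0 < wi i k 0)
  (hwc : forall i, is_weighted_center A b (wi i) (xi i) (yi i) (si i))
  (beta : 'I_l -> R)
  (hbeta : forall i, 0 <= beta i <= 1)
  (hsum : \sum_(i < l) beta i = 1)
  (j : 'I_l) :
  let w : 'cV[R]_m :=
    \col_k (\sum_(i < l) beta i * (yi j k 0 * (yi i k 0)^-1 * wi i k 0)) in
  is_weighted_center A b w (\sum_(i < l) beta i *: xi i) (yi j)
    (\sum_(i < l) beta i *: si i)
  /\ \sum_(k < m) w k 0 = \sum_(k < m) wi j k 0.
Proof.
move=> w.
have primal_i i : A *m xi i + si i = b by case: (hwc i).
have primal_comb := affine_comb_slack (beta:=beta) primal_i hsum.
have weight_eq k : (\sum_(i < l) beta i *: si i) k 0 * yi j k 0 = w k 0.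
  rewrite comb_entry mxE mulr_suml; apply: eq_bigr => i _.
  by rewrite (center_slack_eq (hwc i) (hwpos i)); ring.
split; first split => //.
- move=> k; rewrite comb_entry; apply: convex_comb_gt0 => // i.
    by case/andP: (hbeta i).
  by case: (hwc i) => _ ->.
- by case: (hwc j).
- under eq_bigr => k _ do rewrite -weight_eq.
  under [RHS]eq_bigr => k _ do case: (hwc j) => _ _ _ <-.
  by apply: (slack_dot_dual primal_comb (primal_i j)); case: (hwc j).
Qed.
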